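(* Let $d \geq 3$ be odd. Then there exists a homogeneous form of degree $d$ in $3$ variables over $\mathbb{C}$ whose Waring rank is strictly greater than $((d+1)/2)^2$. Equivalently, $r_{\max}(3,d) > ((d+1)/2)^2$.
   Context: For a complex homogeneous form $F$ of degree $d$, the Waring rank $r(F)$ is the least $r$ such that there exist linear forms $\ell_1,\dots,\ell_r$ and scalars $c_1,\dots,c_r\in\mathbb{C}$ with $F = c_1\ell_1^d+\dots+c_r\ell_r^d$. $r_{\max}(n,d)$ denotes the maximum Waring rank among all homogeneous forms of degree $d$ in $n$ variables over $\mathbb{C}$. (The number $((d+1)/2)^2$ is the largest Waring rank of a monomial of odd degree $d$ in $3$ variables.) *)

From HB Require Import structures.
From mathcomp Require Import all_boot all_order all_algebra.
Set Implicit Arguments. Unset Strict Implicit. Unset Printing Implicit Defensive.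
Import Order.TTheory GRing.Theory Num.Theory.
Local Open Scope ring_scope.

Definition poly3 (C : nzRingType) := {poly {poly {poly C}}}.

Definition cst3 {C : nzRingType} (a : C) : poly3 C := (a%:P)%:P%:P.
Definition varX {C : nzRingType} : poly3 C := 'X.
Definition varY {C : nzRingType} : poly3 C := ('X)%:P.
Definition varZ {C : nzRingType} : poly3 C := (('X)%:P)%:P.

Definition mono3 {C : nzRingType} (i j k : nat) : poly3 C :=
  varX ^+ i * varY ^+ j * varZ ^+ k.

Definition is_form {C : nzRingType} (d : nat) (F : poly3 C) : Prop :=
  exists a : nat -> nat -> C,
    F = \sum_(i < d.+1) \sum_(j < (d - i).+1) cst3 (a i j) * mono3 i j (d - i - j).

Definition linform {C : nzRingType} (l : C * C * C) : poly3 C :=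
  cst3 l.1.1 * varX + cst3 l.1.2 * varY + cst3 l.2 * varZ.

Definition waring_decomp {C : nzRingType} (d : nat) (F : poly3 C) (r : nat) : Prop :=
  exists (c : 'I_r -> C) (l : 'I_r -> C * C * C),
    F = \sum_(k < r) cst3 (c k) * linform (l k) ^+ d.

Definition waring_rank_gt {C : nzRingType} (d : nat) (F : poly3 C) (m : nat) : Prop :=
  forall r, waring_decomp d F r -> (m < r)%N.

(* Write d = 2n+1 and take F = x y^(n-1) z^(n+1) + y^(2n) z.  If
   F = sum_t c_t l_t^d with l_t = a_t x + b_t y + e_t z, comparing coefficients
   gives the moments sum_t c_t a_t^i b_t^j e_t^m up to binomial factors.
   Dehomogenising at the t with a_t <> 0 yields weighted points
   (b_t/a_t, e_t/a_t) of the affine plane whose moments of degree <= 2n all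
   vanish except in bidegree (n-1, n+1).  A linear relation among the values
   of the monomials y^u z^v (u < n, v < n+2) on these points cannot exist:
   multiplying it by the monomial moving its top-degree term onto
   y^(n-1) z^(n+1) leaves a single nonzero moment.  So at least n(n+2) terms
   have a_t <> 0.  If two or more have a_t = 0 this gives r > (n+1)^2;
   otherwise a top-degree moment survives the single point at infinity, and
   the monomials y^n and y^(n+1-ep) z^ep can be added to the family. *)

From HB Require Import structures.
From mathcomp Require Import all_boot all_order all_algebra.
From mathcomp Require Import zify ring.

Set Implicit Arguments.
Unset Strict Implicit.
Unset Printing Implicit Defensive.

Import Order.TTheory GRing.Theory Num.Theory.
Local Open Scope ring_scope.

Lemma card_leq_of_free (F : fieldType) (S I : finType) (T : {set I}) (A : S -> I -> F) :
  (forall g : S -> F, (forall t, t \in T -> \sum_s g s * A s t = 0) -> forall s, g s = 0) ->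
  (#|S| <= #|T|)%N.
Proof.
move=> Afree.
pose M := \matrix_(i < #|S|, j < #|T|) A (enum_val i) (enum_val j).
suff /inj_row_free : forall v : 'rV_#|S|, v *m M = 0 -> v = 0.
  by rewrite -row_leq_rank => /leq_trans; apply; exact: rank_leq_col.
move=> v vM0; apply/rowP => i; rewrite mxE -(enum_valK i).
apply: (Afree (fun s => v 0 (enum_rank s))) => t tT.
transitivity ((v *m M) 0 (enum_rank_in tT t)); last by rewrite vM0 mxE.
rewrite mxE (reindex (@enum_val S predT)) /=; last first.
  by exists enum_rank => x _; [rewrite enum_valK | rewrite enum_rankK].
by apply: eq_bigr => k _; rewrite enum_valK mxE enum_rankK_in.
Qed.

Definition coef3 {C : nzRingType} (P : poly3 C) i j m := ((P`_i)`_j)`_m.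

Lemma coef3D (C : nzRingType) (P Q : poly3 C) i j m :
  coef3 (P + Q) i j m = coef3 P i j m + coef3 Q i j m.
Proof. by rewrite /coef3 !coefD. Qed.

Lemma coef3_sum (C : nzRingType) (I : finType) (F : I -> poly3 C) i j m :
  coef3 (\sum_k F k) i j m = \sum_k coef3 (F k) i j m.
Proof. by rewrite /coef3 !coef_sum. Qed.

Lemma coef3_mono3 (C : comNzRingType) i j m i' j' m' :
  coef3 (mono3 i j m : poly3 C) i' j' m' = ((i', j', m') == (i, j, m))%:R.
Proof.
rewrite /coef3 /mono3 /varX /varY /varZ -!rmorphXn /= -mulrA -rmorphM /= mulrC.
rewrite coefCM coefXn !xpair_eqE; have [_|] := eqVneq i' i; last by rewrite mulr0 !coef0.
rewrite mulr1 mulrC coefCM coefXn; have [_|] := eqVneq j' j; last by rewrite mulr0 !coef0.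
by rewrite mulr1 coefXn.
Qed.

Lemma coef_exp_linear (R : comNzRingType) (c q : R) n i :
  ((c%:P * 'X + q%:P) ^+ n)`_i = q ^+ (n - i) * c ^+ i *+ 'C(n, i).
Proof.
rewrite addrC exprDn coef_sum.
under eq_bigr => k _ do rewrite exprMn -!rmorphXn /= mulrA -rmorphM /= coefMn coefCM coefXn.
case: (ltnP i n.+1) => [ltin|ltni].
  rewrite (bigD1 (Ordinal ltin)) //= eqxx mulr1 big1 ?addr0 // => k ki.
  by rewrite (_ : (i == k) = false) ?mulr0 ?mul0rn // eq_sym; apply: negbTE.
rewrite bin_small // mulr0n big1 // => k _.
by rewrite (_ : (i == k) = false) ?mulr0 ?mul0rn //; have := ltn_ord k; lia.
Qed.

Lemma linformE (C : comNzRingType) (l : C * C * C) :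
  linform l = (l.1.1%:P%:P)%:P * 'X + ((l.1.2%:P)%:P * 'X + ((l.2%:P * 'X)%:P))%:P.
Proof. by rewrite /linform /cst3 /varX /varY /varZ -addrA !rmorphD /= !rmorphM. Qed.

Lemma coef3_linform_exp (C : comNzRingType) (c : C) (l : C * C * C) d i j m :
  (i + j + m = d)%N ->
  coef3 (cst3 c * linform l ^+ d) i j m =
  c * (l.1.1 ^+ i * l.1.2 ^+ j * l.2 ^+ m) *+ ('C(d, i) * 'C(d - i, j)).
Proof.
case: l => [[a b] e] ijm /=.
rewrite /coef3 linformE /= /cst3 !coefCM coef_exp_linear -!rmorphXn /= coefMn coefMC coefMn.
rewrite (coefMC (a ^+ i)) coef_exp_linear coefMn -rmorphXn /= (coefMC (b ^+ j)).
rewrite exprMn -rmorphXn /= coefCM coefXn.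
have -> : m = (d - i - j)%N by lia.
rewrite eqxx mulr1 !mulrnAl !mulrnAr -!mulrnA mulnC.
by congr (_ * _ *+ _); ring.
Qed.

Lemma coef3_waring_sum (C : comNzRingType) r (c : 'I_r -> C) (l : 'I_r -> C * C * C) d i j m :
  (i + j + m = d)%N ->
  coef3 (\sum_k cst3 (c k) * linform (l k) ^+ d) i j m =
  (\sum_k c k * ((l k).1.1 ^+ i * (l k).1.2 ^+ j * (l k).2 ^+ m)) *+ ('C(d, i) * 'C(d - i, j)).
Proof.
by move=> ijm; rewrite coef3_sum -sumrMnl; apply: eq_bigr => k _; rewrite coef3_linform_exp.
Qed.

Lemma is_formD (C : nzRingType) d (F G : poly3 C) :
  is_form d F -> is_form d G -> is_form d (F + G).
Proof.
move=> [a ->] [b ->]; exists (fun i j => a i j + b i j); rewrite -big_split /=.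
apply: eq_bigr => i _; rewrite -big_split /=; apply: eq_bigr => j _.
by rewrite /cst3 !rmorphD mulrDl.
Qed.

Lemma is_form_mono3 (C : nzRingType) d i j m :
  (i + j + m = d)%N -> is_form d (mono3 i j m : poly3 C).
Proof.
move=> ijm; exists (fun i' j' => ((i' == i) && (j' == j))%:R).
have ltid : (i < d.+1)%N by lia.
have ltjd : (j < (d - i).+1)%N by lia.
have cst3_nat (n : nat) : cst3 (n%:R : C) = n%:R by rewrite /cst3 !rmorph_nat.
rewrite (bigD1 (Ordinal ltid)) //= [X in _ + X]big1 ?addr0 => [|i' neq_i']; last first.
  apply: big1 => j' _; rewrite (_ : (i' == i :> nat) = false) ?cst3_nat ?mul0r //.
  by apply: contraNF neq_i' => /eqP ei; apply/eqP/val_inj.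
rewrite (bigD1 (Ordinal ltjd)) //= [X in _ + X]big1 ?addr0 => [|j' neq_j']; last first.
  rewrite eqxx (_ : (j' == j :> nat) = false) ?cst3_nat ?mul0r //.
  by apply: contraNF neq_j' => /eqP ej; apply/eqP/val_inj.
by rewrite !eqxx cst3_nat mul1r; congr mono3; lia.
Qed.

Section MomentRelations.

Variables (C : fieldType) (n : nat) (k0 : C) (L : nat -> nat -> C).

(* A relation g among the monomials y^(u s) z^(v s) on the support of the
   moment functional L, which persists after multiplication by y^p z^q. *)
Definition moment_relation (S : finType) (u v : S -> nat) (g : S -> C) :=
  forall p q, \sum_s g s * L (u s + p) (v s + q) = 0.

Lemma moment_relation_isolated (S : finType) (u v : S -> nat) (g : S -> C) s0 p q :
  moment_relation u v g -> g s0 != 0 -> L (u s0 + p) (v s0 + q) != 0 ->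
  (forall s, s != s0 -> g s != 0 -> L (u s + p) (v s + q) = 0) -> False.
Proof.
move=> /(_ p q) + gs0 Ls0 Ls; rewrite (bigD1 s0) //= big1 ?addr0 => [/eqP|s s_neq0].
  by rewrite mulf_eq0 (negbTE gs0) (negbTE Ls0).
by have [->|/(Ls s s_neq0)->] := eqVneq (g s) 0; rewrite ?mul0r ?mulr0.
Qed.

Hypotheses (n_gt0 : (0 < n)%N) (k0_neq0 : k0 != 0).
Hypothesis L_low : forall j m, (j + m <= n.*2)%N ->
  L j m = if (j, m) == (n.-1, n.+1) then k0 else 0.

Lemma moment_relation_top (S : finType) (u v : S -> nat) (g : S -> C) s0 :
  moment_relation u v g -> g s0 != 0 -> (u s0 < n)%N -> (v s0 < n.+2)%N ->
  (forall s, u s = u s0 -> v s = v s0 -> s = s0) ->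
  (forall s, g s != 0 -> (u s + v s <= u s0 + v s0)%N) -> False.
Proof.
move=> gR gs0 us0 vs0 s0_uniq s0_max.
apply: (moment_relation_isolated (p := n.-1 - u s0) (q := n.+1 - v s0) gR gs0).
  by rewrite L_low; [rewrite ifT //; apply/eqP; congr pair | ]; lia.
move=> s s_neq0 gs; rewrite L_low; last by have := s0_max s gs; lia.
case: eqP => // -[us vs]; case/eqP: s_neq0; apply: s0_uniq; lia.
Qed.

Lemma grid_moment_relation_eq0 (g : 'I_n * 'I_n.+2 -> C) :
  moment_relation (fun s : 'I_n * 'I_n.+2 => s.1 : nat) (fun s => s.2 : nat) g -> forall s, g s = 0.
Proof.
move=> gR s; apply/eqP/negPn/negP => gs.
have [s0 gs0 s0_max] := @arg_maxnP _ s (fun s => g s != 0) (fun s => (s.1 + s.2)%N) gs.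
have := moment_relation_top gR gs0 (ltn_ord _) (ltn_ord _) _ s0_max; apply=> -[a b].
by move=> /= /val_inj-> /val_inj->; case: s0 {gs0 s0_max}.
Qed.

Local Notation ext_grid := (option (option ('I_n * 'I_n.+2))).

Definition ext_grid_exp (ep : nat) (s : ext_grid) : nat * nat :=
  match s with
  | None => (n, 0%N)
  | Some None => (n.+1 - ep, ep)%N
  | Some (Some x) => (x.1 : nat, x.2 : nat)
  end.

Lemma ext_grid_moment_relation_eq0 ep (g : ext_grid -> C) :
  (ep <= 1)%N -> L (n.*2.+1 - ep)%N ep != 0 ->
  moment_relation (fun s => (ext_grid_exp ep s).1) (fun s => (ext_grid_exp ep s).2) g ->
  forall s, g s = 0.
Proof.
move=> ep_le1 L_top gR s; apply/eqP/negPn/negP => gs.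
(* Ties in degree go to grid points, so an extra monomial is selected only
   when it strictly dominates every grid point in the support of g. *)
pose isgrid (s : ext_grid) := if s is Some (Some _) then 1%N else 0%N.
pose key s := ((ext_grid_exp ep s).1 + (ext_grid_exp ep s).2).*2 + isgrid s.
have [s0 gs0 s0_max] := @arg_maxnP _ s (fun s => g s != 0) key gs.
case: s0 gs0 s0_max => [[[a b]|]|] gs0 s0_max.
- have a_lt := ltn_ord a.
  have := moment_relation_top gR gs0 a_lt (ltn_ord b); apply.
    move=> [[[a' b']|]|] /=; [|move=> *; exfalso; lia..].
    by move=> /val_inj-> /val_inj->.
  move=> s' gs'; have := s0_max s' gs'; rewrite /key.
  by case: s' {gs'} => [[?|]|] /=; lia.
- apply: (moment_relation_isolated (p := n) (q := 0) gR gs0).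
    by rewrite /= addn0 (_ : (n.+1 - ep + n = n.*2.+1 - ep)%N) //; lia.
  move=> s' s'_neq gs'; have := s0_max s' gs'; rewrite /key.
  by case: s' {gs'} s'_neq => [[[a b]|]|] //= _ key_le;
    (rewrite L_low; [case: eqP => // -[]; lia | lia]).
- apply: (moment_relation_isolated (p := n.+1 - ep) (q := ep) gR gs0).
    by rewrite /= add0n (_ : (n + (n.+1 - ep) = n.*2.+1 - ep)%N) //; lia.
  move=> s' s'_neq gs'; have := s0_max s' gs'; rewrite /key.
  by case: s' {gs'} s'_neq => [[[a b]|]|] //= _ key_le;
    (rewrite L_low; [case: eqP => // -[]; lia | lia]).
Qed.

End MomentRelations.

Definition plane_moment (C : nzRingType) (I : finType) (T : {set I}) (w B E : I -> C) j m :=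
  \sum_(t in T) w t * (B t ^+ j * E t ^+ m).

Lemma card_leq_of_moment_relation (C : fieldType) (I S : finType) (T : {set I})
    (w B E : I -> C) (u v : S -> nat) :
  (forall g : S -> C, moment_relation (plane_moment T w B E) u v g -> forall s, g s = 0) ->
  (#|S| <= #|T|)%N.
Proof.
move=> gR_eq0; apply: (@card_leq_of_free _ _ _ _ (fun s t => B t ^+ u s * E t ^+ v s)).
move=> g g_vanish; apply: gR_eq0 => p q.
under eq_bigr do rewrite mulr_sumr.
rewrite exchange_big /=; apply: big1 => t tT.
transitivity (w t * B t ^+ p * E t ^+ q * \sum_s g s * (B t ^+ u s * E t ^+ v s)).
  by rewrite mulr_sumr; apply: eq_bigr => s _; rewrite !exprD; ring.
by rewrite g_vanish // mulr0.
Qed.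

Lemma plane_moment_card_le1 (C : nzRingType) (I : finType) (T : {set I}) (w B E : I -> C) :
  (#|T| <= 1)%N ->
  exists gam beta eps, forall j m, plane_moment T w B E j m = gam * (beta ^+ j * eps ^+ m).
Proof.
move=> T_le1; have [/cards0_eq T0|T_neq0] := eqVneq #|T| 0%N.
  by exists 0, 0, 0 => j m; rewrite /plane_moment T0 big_set0 mul0r.
have /cards1P [t ->] : #|T| == 1%N by rewrite eqn_leq T_le1 lt0n.
by exists (w t), (B t), (E t) => j m; rewrite /plane_moment big_set1.
Qed.

(* A single point at infinity, of weight gam and direction (beta, eps),
   cannot cancel both top-degree moments. *)
Lemma top_moment_neq0 (C : idomainType) n (k1 gam beta eps : C) (L : nat -> nat -> C) :
  (0 < n)%N -> k1 != 0 ->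
  L n.*2 1 = k1 - gam * beta ^+ n.*2 * eps -> L n.*2.+1 0 = - (gam * beta ^+ n.*2.+1) ->
  exists2 ep, (ep <= 1)%N & L (n.*2.+1 - ep)%N ep != 0.
Proof.
move=> n_gt0 k1_neq0 L1 L0.
have [L0_eq0|] := eqVneq (L n.*2.+1 0) 0; last by exists 0%N; rewrite ?subn0.
exists 1%N => //; rewrite subSS subn0 L1 subr_eq0; apply/eqP => k1E.
have gam_beta : gam * beta ^+ n.*2.+1 = 0.
  by apply/eqP; rewrite -oppr_eq0 -L0 L0_eq0.
have : beta * k1 = gam * beta ^+ n.*2.+1 * eps by rewrite k1E exprS; ring.
rewrite gam_beta mul0r => /eqP; rewrite mulf_eq0 (negbTE k1_neq0) orbF => /eqP beta0.
by move: k1_neq0; rewrite k1E beta0 expr0n double_eq0 (gtn_eqF n_gt0) mulr0 mul0r eqxx.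
Qed.

Section Dehomogenization.

Variables (C : fieldType) (r d : nat) (c a b e : 'I_r -> C).

Definition waring_moment i j m := \sum_t c t * (a t ^+ i * b t ^+ j * e t ^+ m).

Definition affine_moment :=
  plane_moment [set t | a t != 0] (fun t => c t * a t ^+ d) (fun t => b t / a t) (fun t => e t / a t).

Lemma affine_moment_dehomogenize j m : (j + m <= d)%N ->
  affine_moment j m = \sum_(t | a t != 0) c t * (a t ^+ (d - j - m) * b t ^+ j * e t ^+ m).
Proof.
move=> jm_le_d; rewrite /affine_moment /plane_moment.
apply: eq_big => [t|t]; rewrite inE // => at_neq0.
have -> : a t ^+ d = a t ^+ (d - j - m) * a t ^+ j * a t ^+ m.
  by rewrite -!exprD; congr (_ ^+ _); lia.
by rewrite !expr_div_n; field; rewrite !expf_neq0.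
Qed.

Lemma affine_moment_low j m : (j + m < d)%N -> affine_moment j m = waring_moment (d - j - m) j m.
Proof.
move=> jm_lt_d; rewrite affine_moment_dehomogenize 1?ltnW // /waring_moment.
rewrite [RHS](bigID (fun t => a t != 0)) /= [X in _ = _ + X]big1 ?addr0 // => t /negPn/eqP->.
by rewrite expr0n (_ : (d - j - m == 0)%N = false) ?mul0r ?mulr0 //; lia.
Qed.

Lemma affine_moment_top j m : (j + m = d)%N ->
  affine_moment j m = waring_moment 0 j m - plane_moment [set t | a t == 0] c b e j m.
Proof.
move=> jm_d; rewrite affine_moment_dehomogenize ?jm_d // /waring_moment /plane_moment.
rewrite (_ : (d - j - m = 0)%N); last by lia.
apply/eqP; rewrite eq_sym subr_eq (bigID (fun t => a t != 0)) /=; apply/eqP; congr (_ + _).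
by apply: eq_big => t; rewrite ?inE ?negbK // => _; rewrite expr0 mul1r.
Qed.

End Dehomogenization.

Lemma waring_moment_rank_gt (C : fieldType) n r (c a b e : 'I_r -> C) (k0 k1 : C) :
  (0 < n)%N -> k0 != 0 -> k1 != 0 ->
  (forall i j m, (i + j + m = n.*2.+1)%N -> waring_moment c a b e i j m =
     if (i, j, m) == (1, n.-1, n.+1)%N then k0
     else if (i, j, m) == (0, n.*2, 1)%N then k1 else 0) ->
  (n.+1 ^ 2 < r)%N.
Proof.
move=> n_gt0 k0_neq0 k1_neq0 momE.
set L := affine_moment n.*2.+1 c a b e.
have L_low j m : (j + m <= n.*2)%N -> L j m = if (j, m) == (n.-1, n.+1) then k0 else 0.
  move=> jm_le; rewrite /L affine_moment_low ?momE; [|lia|lia].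
  rewrite !xpair_eqE (_ : (n.*2.+1 - j - m == 0)%N = false) /=; last by lia.
  case: (j =P n.-1) => [j_eq|]; case: (m =P n.+1) => [m_eq|] /=; rewrite ?andbF // !andbT.
  by rewrite (_ : (n.*2.+1 - j - m == 1)%N) //; lia.
set Tfin := [set t | a t != 0]; set Tinf := [set t | a t == 0].
have card_r : (#|Tfin| + #|Tinf| = r)%N.
  rewrite -[RHS](card_ord r) -(cardsC Tfin); congr (_ + _).
  by apply: eq_card => t; rewrite !inE negbK.
have [inf_ge2|inf_le1] := leqP 2 #|Tinf|.
  have := card_leq_of_moment_relation (grid_moment_relation_eq0 n_gt0 k0_neq0 L_low).
  by rewrite card_prod !card_ord -/Tfin; nia.
have [gam [beta [eps infE]]] := plane_moment_card_le1 c b e (ltnSE inf_le1).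
have [ep ep_le1 L_top] : exists2 ep, (ep <= 1)%N & L (n.*2.+1 - ep)%N ep != 0.
  apply: (top_moment_neq0 (gam := gam) (beta := beta) (eps := eps) n_gt0 k1_neq0).
    by rewrite /L affine_moment_top ?momE ?infE ?eqxx ?expr1 ?mulrA //; lia.
  by rewrite /L affine_moment_top ?momE ?infE ?xpair_eqE ?andbF ?expr0 ?mulr1 ?sub0r //; lia.
have := card_leq_of_moment_relation
  (fun g => ext_grid_moment_relation_eq0 (g := g) n_gt0 k0_neq0 L_low ep_le1 L_top).
by rewrite !card_option card_prod !card_ord -/Tfin; nia.
Qed.

Definition high_rank_form {C : nzRingType} (n : nat) : poly3 C :=
  mono3 1 n.-1 n.+1 + mono3 0 n.*2 1.

Lemma is_form_high_rank_form (C : nzRingType) n :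
  (0 < n)%N -> is_form n.*2.+1 (high_rank_form n : poly3 C).
Proof. by move=> n_gt0; apply: is_formD; apply: is_form_mono3; lia. Qed.

Lemma high_rank_form_rank_gt (C : numFieldType) n :
  (0 < n)%N -> waring_rank_gt n.*2.+1 (high_rank_form n : poly3 C) (n.+1 ^ 2).
Proof.
move=> n_gt0 r [c [l decF]]; set d := n.*2.+1.
pose M i j := ('C(d, i) * 'C(d - i, j))%N.
have M_neq0 i j : (i + j <= d)%N -> (M i j)%:R != 0 :> C.
  by move=> ij_le; rewrite pnatr_eq0 -lt0n muln_gt0 !bin_gt0; apply/andP; split; lia.
apply: (waring_moment_rank_gt (c := c) (a := fun t => (l t).1.1) (b := fun t => (l t).1.2)
  (e := fun t => (l t).2) (k0 := (M 1 n.-1)%:R^-1) (k1 := (M 0 n.*2)%:R^-1) n_gt0).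
- by rewrite invr_eq0 M_neq0 //; lia.
- by rewrite invr_eq0 M_neq0 //; lia.
move=> i j m ijm; rewrite /waring_moment.
have Mij_neq0 : (M i j)%:R != 0 :> C by apply: M_neq0; lia.
have := coef3_waring_sum c l ijm; rewrite -decF coef3D !coef3_mono3.
move/esym/(congr1 (fun x => x / (M i j)%:R)); rewrite -mulr_natr mulfK // => ->.
case: eqP => [[? ? ?]|_]; first by subst; rewrite !xpair_eqE /= addr0 mul1r.
by case: eqP => [[? ? ?]|_]; [subst; rewrite add0r mul1r | rewrite add0r mul0r].
Qed.

Theorem theorem1 (C : numClosedFieldType) (d : nat) :
  (3 <= d)%N -> odd d ->
  exists F : poly3 C, is_form d F /\ waring_rank_gt d F (((d + 1) %/ 2) ^ 2)%N.
Proof.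
move=> d_ge3 d_odd.
have [n n_gt0 ->] : exists2 n, (0 < n)%N & d = n.*2.+1.
  by exists d./2; have := odd_double_half d; rewrite d_odd; lia.
have -> : ((n.*2.+1 + 1) %/ 2 = n.+1)%N by rewrite addn1 -doubleS -mul2n mulKn.
exists (high_rank_form n).
by split; [exact: is_form_high_rank_form | exact: high_rank_form_rank_gt].
Qed.
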